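(* Let $X$ be a real Hilbert space and $A,B$ closed convex nonempty subsets of $X$ such that $E$ and $F$ are nonempty and bounded. Let $\{A_n\}$, $\{B_n\}$ be sequences of closed convex nonempty subsets of $X$ with $A_n\to A$ and $B_n\to B$ in the Attouch–Wets sense. Suppose the couple $(A,B)$ is regular, and let $\delta,\epsilon>0$. For each $n\in\mathbb N$ let $a_n,x_n\in A_n$ and $b_n,y_n\in B_n$ be such that $\mathrm{dist}(x_n,E)\to0$ and $\mathrm{dist}(y_n,F)\to0$. Then there exists $n_2\in\mathbb N$ such that for every $n\ge n_2$: (i) if $\mathrm{dist}(a_n,E)\ge 2\epsilon$, $\mathrm{dist}(b_n,F)\ge2\epsilon$ and $a_n=P_{A_n}b_n$, then $\cos\bigl(x_n-a_n,\,b_n-(a_n+v)\bigr)\le\delta$; (ii) if $\mathrm{dist}(a_n,E)\ge 2\epsilon$, $\mathrm{dist}(b_{n+1},F)\ge2\epsilon$ and $b_{n+1}=P_{B_{n+1}}a_n$, then $\cos\bigl(y_{n+1}-b_{n+1},\,a_n+v-b_{n+1}\bigr)\le\delta$.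
   Context: $P_C$ denotes the metric projection onto a closed convex nonempty set $C$; $B_X$ is the closed unit ball; $\mathrm{dist}(x,S)=\inf_{s\in S}\|x-s\|$, $\mathrm{dist}(S,T)=\inf_{s\in S}\mathrm{dist}(s,T)$. $E=\{a\in A:\mathrm{dist}(a,B)=\mathrm{dist}(A,B)\}$, $F=\{b\in B:\mathrm{dist}(b,A)=\mathrm{dist}(A,B)\}$, $v=P_{\overline{B-A}}(0)$. For nonzero $u,w$, $\cos(u,w)=\langle u,w\rangle/(\|u\|\|w\|)$. Attouch–Wets convergence: for nonempty closed $C,D$ and $N\in\mathbb N$ let $e_N(C,D)=\sup_{c\in C\cap NB_X}\mathrm{dist}(c,D)$ ($0$ if $C\cap NB_X=\emptyset$) and $h_N(C,D)=\max\{e_N(C,D),e_N(D,C)\}$; $C_j\to C$ if $\lim_j h_N(C_j,C)=0$ for every $N$. The couple $(A,B)$ (with $E,F\ne\emptyset$) is regular if for each $\epsilon>0$ there is $\delta>0$ such that $\mathrm{dist}(x,E)\le\epsilon$ whenever $\max\{\mathrm{dist}(x,A),\mathrm{dist}(x,B-v)\}\le\delta$. *)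

From HB Require Import structures.
From mathcomp Require Import all_boot all_order all_algebra.
From mathcomp Require Import all_classical all_reals all_analysis.
Set Implicit Arguments. Unset Strict Implicit. Unset Printing Implicit Defensive.
Import Order.TTheory GRing.Theory Num.Theory numFieldNormedType.Exports.
Local Open Scope classical_set_scope.
Local Open Scope ring_scope.

Section Defs.
Context {R : realType} {V : normedModType R}.

Definition is_inner_product (inner : V -> V -> R) : Prop :=
  [/\ (forall x y, inner x y = inner y x),
      (forall (a : R) x y z, inner (a *: x + y) z = a * inner x z + inner y z)
    & (forall x, `|x| ^+ 2 = inner x x)].

Definition convex_set (C : set V) : Prop :=
  forall x y (t : R), C x -> C y -> 0 <= t <= 1 -> C (t *: x + (1 - t) *: y).

Definition ccn (C : set V) : Prop := [/\ closed C, convex_set C & C !=set0].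

Definition norm_bounded (C : set V) : Prop := exists M : R, forall c, C c -> `|c| <= M.

Definition dist (x : V) (S : set V) : R := inf [set `|x - s| | s in S].

Definition dist_sets (S T : set V) : R := inf [set dist s T | s in S].

(* p = P_C x : p is the (unique, in a Hilbert space) nearest point of C to x *)
Definition is_proj (C : set V) (x p : V) : Prop :=
  C p /\ forall c, C c -> `|x - p| <= `|x - c|.

Definition Eset (A B : set V) : set V :=
  [set a | A a /\ dist a B = dist_sets A B].
Definition Fset (A B : set V) : set V :=
  [set b | B b /\ dist b A = dist_sets A B].

Definition minus_set (B A : set V) : set V := [set b - a | b in B & a in A].
Definition translate_set (B : set V) (v : V) : set V := [set b - v | b in B].

(* cos(u,w) = <u,w>/(||u|| ||w||)  (equal to 0 if u = 0 or w = 0 by the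
   convention x / 0 = 0) *)
Definition cosine (inner : V -> V -> R) (u w : V) : R :=
  inner u w / (`|u| * `|w|).

Definition e_N (N : nat) (C D : set V) : R :=
  let S := C `&` [set x | `|x| <= N%:R] in
  if `[< S !=set0 >] then sup [set dist c D | c in S] else 0.

Definition h_N (N : nat) (C D : set V) : R := Num.max (e_N N C D) (e_N N D C).

Definition AW_conv (Cs : nat -> set V) (C : set V) : Prop :=
  forall N : nat, (fun j => h_N N (Cs j) C) @ \oo --> (0 : R).

(* regularity of the couple (A,B), with v = P_{cl(B-A)}(0) *)
Definition regular_couple (A B : set V) (v : V) : Prop :=
  forall eps : R, 0 < eps -> exists2 delta : R, 0 < delta &
    forall x, Num.max (dist x A) (dist x (translate_set B v)) <= delta ->
      dist x (Eset A B) <= eps.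

End Defs.

From Pilot Require Import Defs.
From HB Require Import structures.
From mathcomp Require Import all_boot all_order all_algebra.
From mathcomp Require Import all_classical all_reals all_analysis.
From mathcomp Require Import ring lra.
Import Order.TTheory GRing.Theory Num.Theory numFieldNormedType.Exports.
Set Implicit Arguments. Unset Strict Implicit. Unset Printing Implicit Defensive.
Local Open Scope classical_set_scope.
Local Open Scope ring_scope.

(* Since a = P_{A_n} b, the variational inequality <x - a, b - a> <= 0 bounds the
   numerator of the first cosine by <a - x, v>, and symmetrically the second one by
   <b - y, -v>.  These drifts are O(rho) |a - x|: the point of [x, a] at distance eps
   from x lies in A_n, hence rho-close to A (Attouch-Wets), x is rho-close to some e
   in E, e + v is close to B, and the minimality of v in cl(B - A) gives
   <b' - a' - v, v> >= 0 for all a' in A, b' in B.  The denominators stay above a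
   fixed gam > 0 by regularity: if b were gam-close to a + v, a bounded point of
   [x, a] at distance >= 2 eps from E would be close both to A and to B - v. *)

Lemma le0_of_le_mul_small (R : realFieldType) (x w : R) :
  (forall t, 0 < t -> t <= 1 -> x <= t * w) -> x <= 0.
Proof.
move=> small; rewrite leNgt; apply/negP => x0.
have w0 : 0 < w by have := small 1 ltr01 (lexx _); rewrite mul1r; exact: lt_le_trans.
have xw0 : 0 < x + w by rewrite addr_gt0.
have := small (x / (x + w)) (divr_gt0 x0 xw0).
rewrite ler_pdivrMr // mul1r lerDl (ltW w0) mulrAC ler_pdivlMr // => /(_ isT).
nra.
Qed.

Section Combinations.
Variables (R : pzRingType) (X : lmodType R).

Lemma comb_subE (t : R) (c p : X) : t *: c + (1 - t) *: p = p + t *: (c - p).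
Proof. by rewrite scalerBr scalerBl scale1r addrCA addrA. Qed.

Lemma comb_shiftB (t : R) (p q p' q' w : X) :
  t *: p + (1 - t) *: q + w - (t *: p' + (1 - t) *: q') =
  t *: (p + w - p') + (1 - t) *: (q + w - q').
Proof.
have {1}-> : w = t *: w + (1 - t) *: w by rewrite -scalerDl addrC subrK scale1r.
by rewrite opprD (addrACA (t *: p)) (addrACA (t *: p + t *: w)) !scalerBr !scalerDr.
Qed.

End Combinations.

Section InnerProduct.
Variables (R : realType) (X : normedModType R) (inner : X -> X -> R).
Hypothesis hin : is_inner_product inner.

Lemma innerC x y : inner x y = inner y x.
Proof. by case: hin. Qed.

Lemma inner_normE x : `|x| ^+ 2 = inner x x.
Proof. by case: hin. Qed.

Lemma innerDl x y z : inner (x + y) z = inner x z + inner y z.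
Proof. by case: hin => _ lin _; have := lin 1 x y z; rewrite scale1r mul1r. Qed.

Lemma inner0l z : inner 0 z = 0.
Proof.
have := innerDl 0 0 z; rewrite addr0 => h.
by apply: (addrI (inner 0 z)); rewrite addr0 -h.
Qed.

Lemma innerZl a x z : inner (a *: x) z = a * inner x z.
Proof.
by case: hin => _ lin _; have := lin a x 0 z; rewrite addr0 inner0l addr0.
Qed.

Lemma innerNl x z : inner (- x) z = - inner x z.
Proof. by rewrite -scaleN1r innerZl mulN1r. Qed.

Lemma innerBl x y z : inner (x - y) z = inner x z - inner y z.
Proof. by rewrite innerDl innerNl. Qed.

Lemma innerDr x y z : inner z (x + y) = inner z x + inner z y.
Proof. by rewrite innerC innerDl !(innerC z). Qed.

Lemma innerZr a x z : inner z (a *: x) = a * inner z x.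
Proof. by rewrite innerC innerZl innerC. Qed.

Lemma innerNr x z : inner z (- x) = - inner z x.
Proof. by rewrite innerC innerNl innerC. Qed.

Lemma innerBr x y z : inner z (x - y) = inner z x - inner z y.
Proof. by rewrite innerDr innerNr. Qed.

Lemma normD2 x y : `|x + y| ^+ 2 = `|x| ^+ 2 + 2 * inner x y + `|y| ^+ 2.
Proof. by rewrite !inner_normE innerDl !innerDr (innerC y x); ring. Qed.

Lemma normB2 x y : `|x - y| ^+ 2 = `|x| ^+ 2 - 2 * inner x y + `|y| ^+ 2.
Proof. by rewrite normD2 normrN innerNr; ring. Qed.

Lemma inner_le_norm x y : inner x y <= `|x| * `|y|.
Proof.
have [->|x0] := eqVneq x 0; first by rewrite inner0l normr0 mul0r.
have [->|y0] := eqVneq y 0; first by rewrite innerC inner0l normr0 mulr0.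
have := sqr_ge0 `| `|y| *: x - `|x| *: y|.
rewrite normB2 !normrZ innerZl innerZr !normr_id.
have : 0 < `|x| * `|y| by rewrite mulr_gt0 ?normr_gt0.
nra.
Qed.

Lemma inner_ge0_of_segment_min q p c :
  (forall t, 0 < t -> t <= 1 -> `|p - q| <= `|p + t *: (c - p) - q|) ->
  0 <= inner (c - p) (p - q).
Proof.
move=> pmin; rewrite -oppr_le0.
apply: (@le0_of_le_mul_small _ _ (`|c - p| ^+ 2 / 2)) => t t0 t1.
have := pmin t t0 t1; rewrite addrAC -(ler_sqr (normr_ge0 _) (normr_ge0 _)).
rewrite (normD2 (p - q)) normrZ innerZr innerC (gtr0_norm t0).
nra.
Qed.

Lemma proj_inner_ge0 (C : set X) q p c :
  Defs.convex_set C -> is_proj C q p -> C c -> 0 <= inner (c - p) (p - q).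
Proof.
move=> cC [Cp pmin] Cc; apply: inner_ge0_of_segment_min => t t0 t1.
rewrite distrC [X in _ <= X]distrC -comb_subE.
by apply/pmin/cC; rewrite ?(ltW t0).
Qed.

Lemma inner_drift_near_le z p q s o w (rho : R) :
  `|z - p| <= rho -> `|q - (s + w)| <= rho -> `|s - o| <= rho ->
  0 <= inner (q - p - w) w -> inner (z - o) w <= 3 * rho * `|w|.
Proof.
move=> zp qs so gap.
(* z - o = (z - p) - (q - p - w) + (q - (s + w)) + (s - o) *)
have := inner_le_norm (z - p) w; have := inner_le_norm (q - (s + w)) w.
have := inner_le_norm (s - o) w; have := normr_ge0 w.
move: gap; rewrite !innerBl !innerDl.
nra.
Qed.

End InnerProduct.

Section Distance.
Variables (R : realType) (X : normedModType R).
Implicit Types (S C D : set X) (x : X).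

Lemma dist_le S x s : S s -> dist x S <= `|x - s|.
Proof.
move=> Ss; apply: ge_inf; last by exists s.
by exists 0 => _ [t _ <-].
Qed.

Lemma dist_ge S x m : S !=set0 -> (forall s, S s -> m <= `|x - s|) -> m <= dist x S.
Proof.
move=> [s0 Ss0] mS; apply: lb_le_inf; first by exists `|x - s0|, s0.
by move=> _ [s Ss <-]; exact: mS.
Qed.

Lemma dist_lt_near S x r : S !=set0 -> dist x S < r -> exists2 s, S s & `|x - s| < r.
Proof.
move=> [s0 Ss0] xr.
have [_ [s Ss <-]] := inf_lt (ex_intro _ _ (ex_intro2 _ _ s0 Ss0 erefl)) xr.
by exists s.
Qed.

Lemma dist_ge_norm S (M : R) x :
  S !=set0 -> (forall s, S s -> `|s| <= M) -> `|x| - M <= dist x S.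
Proof.
move=> nS SM; apply: dist_ge => // s Ss.
by have := lerB_dist x s; have := SM s Ss; lra.
Qed.

Lemma e_N_lt_near (N : nat) C D (rho : R) c :
  D !=set0 -> e_N N C D < rho -> C c -> `|c| <= N%:R ->
  exists2 d, D d & `|c - d| < rho.
Proof.
move=> [d0 Dd0] CD Cc cN; apply: dist_lt_near; first by exists d0.
apply: le_lt_trans CD; rewrite /e_N.
have CN : (C `&` [set y | `|y| <= N%:R]) !=set0 by exists c.
rewrite (asboolT CN); apply: ub_le_sup; last by exists c.
exists (N%:R + `|d0|) => _ [c' [_ c'N] <-].
apply: le_trans (dist_le _ Dd0) _; apply: le_trans (ler_normB _ _) _.
by rewrite lerD2r.
Qed.

Lemma comb_shift_norm_le (t g h : R) (p q p' q' w : X) :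
  0 <= t <= 1 -> `|p + w - p'| <= g -> `|q + w - q'| <= h ->
  `|t *: p + (1 - t) *: q + w - (t *: p' + (1 - t) *: q')| <= t * g + (1 - t) * h.
Proof.
move=> /andP[t0 t1] pg qh; rewrite comb_shiftB.
apply: le_trans (ler_normD _ _) _.
rewrite !normrZ (ger0_norm t0) ger0_norm ?subr_ge0 //.
by apply: lerD; apply: ler_wpM2l; rewrite ?subr_ge0.
Qed.

Lemma far_point_on_segment S (M eps : R) (o p : X) :
  S !=set0 -> (forall s, S s -> `|s| <= M) -> 0 < eps -> eps <= dist p S ->
  exists2 t, 0 < t <= 1 &
    eps <= dist (t *: p + (1 - t) *: o) S /\ t * `|p - o| <= `|o| + M + eps.
Proof.
move=> nS SM eps0 pS.
have M0 : 0 <= M by case: nS => s Ss; exact: le_trans (SM s Ss).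
have r0 : 0 < `|o| + M + eps by have := normr_ge0 o; lra.
have [po_r | r_po] := leP `|p - o| (`|o| + M + eps).
  by exists 1; rewrite ?ltr01 ?lexx // subrr scale0r addr0 scale1r mul1r.
have po0 : 0 < `|p - o| := lt_trans r0 r_po.
set t := (`|o| + M + eps) / `|p - o|.
have t_po : t * `|p - o| = `|o| + M + eps by rewrite divfK // gt_eqF.
exists t; first by rewrite divr_gt0 //= ler_pdivrMr // mul1r ltW.
split; last by rewrite t_po.
apply: le_trans (dist_ge_norm _ nS SM); rewrite comb_subE (addrC o).
have := lerB_normD (t *: (p - o)) o.
by rewrite normrZ gtr0_norm ?divr_gt0 // t_po; lra.
Qed.

End Distance.

Section SegmentEstimates.
Variables (R : realType) (X : normedModType R) (inner : X -> X -> R).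
Hypothesis hin : is_inner_product inner.

Lemma inner_drift_le (C P : set X) (w s q o p : X) (N : nat) (eps rho : R) :
  Defs.convex_set C -> C o -> C p -> 0 < eps -> eps <= `|p - o| ->
  `|o| + eps <= N%:R -> P !=set0 -> e_N N C P < rho ->
  (forall p', P p' -> 0 <= inner (q - p' - w) w) ->
  `|s - o| <= rho -> `|q - (s + w)| <= rho ->
  inner (p - o) w <= 3 * rho * `|w| / eps * `|p - o|.
Proof.
move=> cC Co Cp eps0 eps_po oN nP CP gap so qs.
have po0 : 0 < `|p - o| := lt_le_trans eps0 eps_po.
set t := eps / `|p - o|.
have t0 : 0 < t by rewrite divr_gt0.
have t1 : t <= 1 by rewrite ler_pdivrMr // mul1r.
have Cz : C (t *: p + (1 - t) *: o) by apply: cC; rewrite // ltW.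
have zo : t *: p + (1 - t) *: o - o = t *: (p - o).
  by rewrite comb_subE addrC addKr.
have zN : `|t *: p + (1 - t) *: o| <= N%:R.
  have := lerB_dist (t *: p + (1 - t) *: o) o.
  by rewrite zo normrZ gtr0_norm // divfK ?gt_eqF //; lra.
have [p' Pp' zp'] := e_N_lt_near nP CP Cz zN.
have := inner_drift_near_le hin (ltW zp') qs so (gap _ Pp').
rewrite zo (innerZl hin) => tdrift.
rewrite -(ler_pM2l t0) (_ : t * (_ * `|p - o|) = 3 * rho * `|w|) //.
by rewrite /t; field; rewrite ?gt_eqF.
Qed.

Lemma cosine_proj_le (C : set X) (o p q w : X) (k gam : R) :
  Defs.convex_set C -> is_proj C q p -> C o -> 0 <= k -> 0 < gam ->
  gam < `|q - p - w| -> inner (p - o) w <= k * `|p - o| ->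
  cosine inner (o - p) (q - p - w) <= k / gam.
Proof.
move=> cC qp Co k0 gam0 gap drift.
have num : inner (o - p) (q - p - w) <= k * `|o - p|.
  have := proj_inner_ge0 hin cC qp Co.
  by move: drift; rewrite distrC !(innerBl hin, innerBr hin); lra.
rewrite /cosine; have [->|op0] := eqVneq `|o - p| 0.
  by rewrite mul0r invr0 mulr0 divr_ge0 // ltW.
have op_pos : 0 < `|o - p| by rewrite lt_def op0 normr_ge0.
rewrite ler_pdivrMr ?mulr_gt0 // ?(lt_trans gam0 gap) //.
apply: le_trans num _; rewrite mulrCA [k * _]mulrC ler_wpM2l //.
by rewrite mulrAC ler_pdivlMr // ler_wpM2l // ltW.
Qed.

End SegmentEstimates.

Section MinimalDisplacement.
Variables (R : realType) (X : normedModType R) (inner : X -> X -> R).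
Variables (A B : set X) (v : X).
Hypotheses (hin : is_inner_product inner)
  (cA : Defs.convex_set A) (cB : Defs.convex_set B)
  (nA : A !=set0) (nB : B !=set0)
  (hv : is_proj (closure (minus_set B A)) 0 v).

Local Notation K := (minus_set B A).
Local Notation E := (Eset A B).
Local Notation F := (Fset A B).

Lemma minus_set_mem a b : A a -> B b -> K (b - a).
Proof. by move=> Aa Bb; exists b => //; exists a. Qed.

Lemma minus_set_convex : Defs.convex_set K.
Proof.
move=> _ _ t [b1 Bb1 [a1 Aa1 <-]] [b2 Bb2 [a2 Aa2 <-]] t01.
rewrite !scalerBr addrACA -opprD.
by apply: minus_set_mem; [apply: cA | apply: cB].
Qed.

Lemma proj0_norm_le c : K c -> `|v| <= `|c|.
Proof. by move=> Kc; have := hv.2 c (subset_closure Kc); rewrite !sub0r !normrN. Qed.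

Lemma proj0_approx eta : 0 < eta -> exists2 c, K c & `|v - c| < eta.
Proof.
move=> eta0; have [c [Kc vc]] := hv.1 _ (nbhsx_ballx v eta eta0).
by exists c => //; move: vc; rewrite -ball_normE.
Qed.

Lemma inner_gap_ge0 a b : A a -> B b -> 0 <= inner (b - a - v) v.
Proof.
move=> Aa Bb; rewrite -[v in inner _ v]subr0.
apply: (inner_ge0_of_segment_min hin) => t t0 t1; rewrite !subr0.
apply/ler_addgt0Pr => e e0.
(* v need not lie in K: compare with t (b - a) + (1 - t) c for some c in K near v *)
have [c Kc vc] := proj0_approx e0.
have t01 : 0 <= t <= 1 by rewrite ltW.
have := proj0_norm_le (minus_set_convex (minus_set_mem Aa Bb) Kc t01).
have -> : t *: (b - a) + (1 - t) *: c = v + t *: (b - a - v) + (1 - t) *: (c - v).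
  by rewrite -comb_subE (scalerBr (1 - t)) addrACA subrr addr0.
move=> /le_trans; apply; apply: le_trans (ler_normD _ _) _; rewrite lerD2l.
rewrite normrZ ger0_norm ?subr_ge0 // distrC.
by have := normr_ge0 (v - c); nra.
Qed.

Lemma dist_sets_le_proj0 : dist_sets A B <= `|v|.
Proof.
apply/ler_addgt0Pr => e e0.
have [_ [b Bb [a Aa <-]] vc] := proj0_approx e0.
have lbd : has_lbound [set dist a' B | a' in A].
  by exists 0 => _ [a' _ <-]; apply: dist_ge => // b' _.
apply: le_trans (ge_inf lbd (imageP _ Aa)) _; apply: le_trans (dist_le _ Bb) _.
rewrite distrC; have := lerB_dist (b - a) v; rewrite [`|_ - v|]distrC; lra.
Qed.

Lemma near_proj0 tau : 0 < tau -> exists2 eta, 0 < eta &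
  forall a b, A a -> B b -> `|b - a| < `|v| + eta -> `|b - a - v| <= tau.
Proof.
move=> tau0; have v0 := normr_ge0 v.
have v1 : 0 < 2 * `|v| + 1 by lra.
pose eta := Num.min 1 (tau ^+ 2 / (2 * `|v| + 1)).
have eta0 : 0 < eta by rewrite lt_min ltr01 divr_gt0 ?exprn_gt0.
have eta1 : eta <= 1 by rewrite ge_min lexx.
have eta_tau : eta * (2 * `|v| + 1) <= tau ^+ 2.
  by rewrite -ler_pdivlMr // ge_min lexx orbT.
exists eta => // a b Aa Bb ab.
have := inner_gap_ge0 Aa Bb; have := proj0_norm_le (minus_set_mem Aa Bb).
rewrite -(ler_sqr (normr_ge0 _) (ltW tau0)) (normB2 hin) (innerBl hin).
rewrite -(inner_normE hin).
by have := normr_ge0 (b - a); nra.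
Qed.

Lemma Eset_shift_near e tau : E e -> 0 < tau -> exists2 b, B b & `|b - (e + v)| <= tau.
Proof.
move=> [Ae eB] tau0; have [eta eta0 close] := near_proj0 tau0.
have : dist e B < `|v| + eta by rewrite eB (le_lt_trans dist_sets_le_proj0) // ltrDl.
move=> /(dist_lt_near nB) [b Bb eb]; exists b => //.
by rewrite opprD addrA; apply: close; rewrite // distrC.
Qed.

Lemma Fset_shift_near f tau : F f -> 0 < tau -> exists2 a, A a & `|a - (f - v)| <= tau.
Proof.
move=> [Bf fA] tau0; have [eta eta0 close] := near_proj0 tau0.
have : dist f A < `|v| + eta by rewrite fA (le_lt_trans dist_sets_le_proj0) // ltrDl.
move=> /(dist_lt_near nA) [a Aa fa]; exists a => //.
by rewrite distrC addrAC; apply: close.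
Qed.

End MinimalDisplacement.

Section Estimates.
Variables (R : realType) (X : normedModType R) (inner : X -> X -> R).
Variables (A B : set X) (v : X) (ME MF : R).
Hypotheses (hin : is_inner_product inner)
  (cA : Defs.convex_set A) (cB : Defs.convex_set B)
  (nA : A !=set0) (nB : B !=set0)
  (hv : is_proj (closure (minus_set B A)) 0 v)
  (nE : Eset A B !=set0) (hME : forall e, Eset A B e -> `|e| <= ME)
  (nF : Fset A B !=set0) (hMF : forall f, Fset A B f -> `|f| <= MF).

Local Notation E := (Eset A B).
Local Notation F := (Fset A B).

Let ME_ge0 : 0 <= ME.
Proof. by case: nE => e Ee; exact: le_trans (hME Ee). Qed.

Let MF_ge0 : 0 <= MF.
Proof. by case: nF => f Ff; exact: le_trans (hMF Ff). Qed.

(* lra only reads the local context, so section hypotheses are re-introduced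
   with [have] before calling it. *)
Section Scales.
Variables (eps rho gam dr : R) (N : nat).
Hypotheses (eps0 : 0 < eps) (rho0 : 0 < rho) (rho_eps : rho <= eps)
  (gam0 : 0 < gam) (gam_dr : gam + 4 * rho <= dr)
  (hN : 3 * ME + MF + `|v| + gam + 7 * eps <= N%:R)
  (hreg : forall z, Num.max (dist z A) (dist z (translate_set B v)) <= dr ->
     dist z E <= eps).

Let drift_ge0 : 0 <= 3 * rho * `|v| / eps.
Proof. by rewrite divr_ge0 ?mulr_ge0 // ltW. Qed.

Lemma inner_drift_A (An : set X) x e a :
  Defs.convex_set An -> An x -> An a -> E e -> `|x - e| < rho ->
  2 * eps <= dist a E -> e_N N An A < rho ->
  inner (a - x) v <= 3 * rho * `|v| / eps * `|a - x|.
Proof.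
move=> cAn Anx Ana Ee xe aE AnA.
have [b0 Bb0 b0e] := Eset_shift_near hin cA cB nB hv Ee rho0.
apply: (inner_drift_le hin cAn Anx Ana eps0 _ _ nA AnA _ _ b0e).
- have : `|a - e| <= `|a - x| + `|x - e| := ler_distD x a e.
  by have := dist_le a Ee; have := rho_eps; lra.
- apply: le_trans hN; have : `|x| - `|e| <= `|x - e| := lerB_dist x e.
  have := hME Ee; have := ME_ge0; have := MF_ge0; have := normr_ge0 v.
  by have := rho_eps; have := gam0; have := eps0; lra.
- by move=> p' Ap'; apply: (inner_gap_ge0 hin cA cB hv).
- by rewrite distrC ltW.
Qed.

Lemma inner_drift_B (Bm : set X) y f b :
  Defs.convex_set Bm -> Bm y -> Bm b -> F f -> `|y - f| < rho ->
  2 * eps <= dist b F -> e_N N Bm B < rho ->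
  inner (b - y) (- v) <= 3 * rho * `|v| / eps * `|b - y|.
Proof.
move=> cBm Bmy Bmb Ff yf bF BmB.
have [a0 Aa0 a0f] := Fset_shift_near hin cA cB nA nB hv Ff rho0.
rewrite -(normrN v).
apply: (inner_drift_le hin cBm Bmy Bmb eps0 _ _ nB BmB _ _ a0f).
- have : `|b - f| <= `|b - y| + `|y - f| := ler_distD y b f.
  by have := dist_le b Ff; have := rho_eps; lra.
- apply: le_trans hN; have : `|y| - `|f| <= `|y - f| := lerB_dist y f.
  have := hMF Ff; have := ME_ge0; have := normr_ge0 v.
  by have := rho_eps; have := gam0; have := eps0; lra.
- move=> p' Bp'; have := inner_gap_ge0 hin cA cB hv Aa0 Bp'.
  by rewrite !(innerBl hin, innerNr hin, innerNl hin); lra.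
- by rewrite distrC ltW.
Qed.

Lemma Eset_shift_near_approx (Bm : set X) x e : Bm !=set0 -> E e -> `|x - e| < rho ->
  e_N N B Bm < rho -> exists2 y, Bm y & `|x + v - y| <= 3 * rho.
Proof.
move=> nBm Ee xe BBm.
have [b0 Bb0 b0e] := Eset_shift_near hin cA cB nB hv Ee rho0.
have b0N : `|b0| <= N%:R.
  apply: le_trans hN.
  have : `|b0| - `|e + v| <= `|b0 - (e + v)| := lerB_dist _ _.
  have : `|e + v| <= `|e| + `|v| := ler_normD _ _.
  have := hME Ee; have := ME_ge0; have := MF_ge0.
  by have := rho_eps; have := gam0; have := eps0; lra.
have [y Bmy b0y] := e_N_lt_near nBm BBm Bb0 b0N.
exists y => //.
have : `|x + v - y| <= `|x - e| + `|e + v - y|.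
  have -> : x - e = x + v - (e + v) by rewrite opprD addrACA subrr addr0.
  exact: ler_distD.
have : `|e + v - y| <= `|b0 - (e + v)| + `|b0 - y|.
  by rewrite [`|b0 - _|]distrC; apply: ler_distD.
lra.
Qed.

Lemma shift_gap_gt (An Bm : set X) x e a b :
  Defs.convex_set An -> Defs.convex_set Bm -> An x -> An a -> Bm b ->
  E e -> `|x - e| < rho -> 2 * eps <= dist a E ->
  e_N N An A < rho -> e_N N Bm B < rho -> e_N N B Bm < rho ->
  gam < `|a + v - b|.
Proof.
move=> cAn cBm Anx Ana Bmb Ee xe aE AnA BmB BBm.
rewrite ltNge; apply/negP => ab_gam.
have x_le : `|x| <= ME + rho.
  have : `|x| - `|e| <= `|x - e| := lerB_dist x e.
  by have := hME Ee; lra.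
have eps2 : 0 < 2 * eps by rewrite mulr_gt0.
have [t /andP[t0 t1] [zE zx]] := far_point_on_segment x nE hME eps2 aE.
set z := t *: a + (1 - t) *: x in zE.
have t01 : 0 <= t <= 1 by rewrite ltW.
have Anz : An z by exact: cAn.
have z_le : `|z| <= 3 * ME + 4 * eps.
  have : `|z| <= `|x| + t * `|a - x|.
    rewrite /z comb_subE; apply: le_trans (ler_normD _ _) _.
    by rewrite normrZ (ger0_norm (ltW t0)).
  by have := rho_eps; lra.
have zN : `|z| <= N%:R.
  by apply: le_trans hN; have := normr_ge0 v; have := MF_ge0; have := gam0; lra.
have [y Bmy xy] := Eset_shift_near_approx (ex_intro _ b Bmb) Ee xe BBm.
set z' := t *: b + (1 - t) *: y.
have Bmz' : Bm z' by exact: cBm.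
have zz' : `|z + v - z'| <= gam + 3 * rho.
  apply: le_trans (comb_shift_norm_le t01 ab_gam xy) _.
  by have := gam0; have := rho0; nra.
have z'N : `|z'| <= N%:R.
  apply: le_trans hN.
  have : `|z'| - `|z + v| <= `|z + v - z'| by rewrite [`|z + v - _|]distrC lerB_dist.
  have : `|z + v| <= `|z| + `|v| := ler_normD _ _.
  by have := MF_ge0; have := rho_eps; lra.
have [p Ap zp] := e_N_lt_near nA AnA Anz zN.
have [c Bc z'c] := e_N_lt_near nB BmB Bmz' z'N.
have zA : dist z A <= dr.
  by apply: le_trans (dist_le _ Ap) _; have := gam_dr; have := gam0; have := rho0; lra.
have Bvc : translate_set B v (c - v) by exists c.
have zBv : dist z (translate_set B v) <= dr.
  apply: le_trans (dist_le _ Bvc) _.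
  have : `|z + v - c| <= `|z + v - z'| + `|z' - c| := ler_distD _ _ _.
  by rewrite opprB addrA; have := gam_dr; lra.
by have := @hreg z; rewrite ge_max zA zBv => /(_ isT); have := eps0; lra.
Qed.

Lemma cosine_A_le (An Bm : set X) x a b :
  Defs.convex_set An -> Defs.convex_set Bm -> An x -> An a -> Bm b ->
  dist x E < rho -> 2 * eps <= dist a E ->
  h_N N An A < rho -> h_N N Bm B < rho -> is_proj An b a ->
  cosine inner (x - a) (b - (a + v)) <= 3 * rho * `|v| / eps / gam.
Proof.
move=> cAn cBm Anx Ana Bmb xE aE.
rewrite /h_N !gt_max => /andP[AnA _] /andP[BmB BBm] ba.
have [e Ee xe] := dist_lt_near nE xE.
rewrite opprD addrA; apply: (cosine_proj_le hin cAn ba Anx drift_ge0 gam0).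
- by rewrite -addrA -opprD distrC; exact: shift_gap_gt Ee xe aE AnA BmB BBm.
- exact: inner_drift_A Ee xe aE AnA.
Qed.

Lemma cosine_B_le (An Bm : set X) x y a b :
  Defs.convex_set An -> Defs.convex_set Bm -> An x -> An a -> Bm y -> Bm b ->
  dist x E < rho -> dist y F < rho -> 2 * eps <= dist a E -> 2 * eps <= dist b F ->
  h_N N An A < rho -> h_N N Bm B < rho -> is_proj Bm a b ->
  cosine inner (y - b) (a + v - b) <= 3 * rho * `|v| / eps / gam.
Proof.
move=> cAn cBm Anx Ana Bmy Bmb xE yF aE bF.
rewrite /h_N !gt_max => /andP[AnA _] /andP[BmB BBm] ab.
have [e Ee xe] := dist_lt_near nE xE.
have [f Ff yf] := dist_lt_near nF yF.
have -> : a + v - b = a - b - - v by rewrite opprK addrAC.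
apply: (cosine_proj_le hin cBm ab Bmy drift_ge0 gam0).
- by rewrite opprK addrAC; exact: shift_gap_gt Ee xe aE AnA BmB BBm.
- exact: inner_drift_B Ff yf bF BmB.
Qed.

End Scales.

Lemma cosine_estimates eps delta : 0 < eps -> 0 < delta -> regular_couple A B v ->
  exists2 rho, 0 < rho & exists N : nat,
  (forall (An Bm : set X) x a b,
     Defs.convex_set An -> Defs.convex_set Bm -> An x -> An a -> Bm b ->
     dist x E < rho -> 2 * eps <= dist a E ->
     h_N N An A < rho -> h_N N Bm B < rho -> is_proj An b a ->
     cosine inner (x - a) (b - (a + v)) <= delta) /\
  (forall (An Bm : set X) x y a b,
     Defs.convex_set An -> Defs.convex_set Bm -> An x -> An a -> Bm y -> Bm b ->
     dist x E < rho -> dist y F < rho -> 2 * eps <= dist a E -> 2 * eps <= dist b F ->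
     h_N N An A < rho -> h_N N Bm B < rho -> is_proj Bm a b ->
     cosine inner (y - b) (a + v - b) <= delta).
Proof.
move=> eps0 delta0 reg; have [dr dr0 hreg] := reg eps eps0.
have v0 := normr_ge0 v.
pose gam := dr / 2; pose q := delta * gam * eps / (3 * `|v| + 1).
have gam0 : 0 < gam by rewrite divr_gt0.
have q0 : 0 < q by rewrite !(divr_gt0, mulr_gt0) //; lra.
have v1 : 0 < 3 * `|v| + 1 by lra.
have q_v : q * (3 * `|v| + 1) = delta * gam * eps by rewrite /q divfK ?gt_eqF.
pose rho := Num.min eps (Num.min (dr / 8) q).
have rho0 : 0 < rho by rewrite !lt_min eps0 q0 divr_gt0.
have rho_eps : rho <= eps by rewrite ge_min lexx.
have gam_dr : gam + 4 * rho <= dr.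
  have : rho <= dr / 8 by rewrite !ge_min lexx orbT.
  by rewrite /gam; lra.
have k_delta : 3 * rho * `|v| / eps / gam <= delta.
  have : rho <= q by rewrite !ge_min lexx !orbT.
  by rewrite !ler_pdivrMr //; nra.
exists rho => //; exists (Num.Def.archi_bound (3 * ME + MF + `|v| + gam + 7 * eps)).
have N_ge0 : 0 <= 3 * ME + MF + `|v| + gam + 7 * eps.
  by have := ME_ge0; have := MF_ge0; lra.
have hN := ltW (archi_boundP N_ge0).
have cosA := cosine_A_le eps0 rho0 rho_eps gam0 gam_dr hN hreg.
have cosB := cosine_B_le eps0 rho0 rho_eps gam0 gam_dr hN hreg.
by split=> [An Bm x a b | An Bm x y a b] cAn cBm *; apply: le_trans k_delta;
  [apply: (cosA An Bm x a b cAn cBm) | apply: (cosB An Bm x y a b cAn cBm)].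
Qed.

End Estimates.

Theorem lemma4p6 (R : realType) (X : completeNormedModType R)
  (inner : X -> X -> R) (A B : set X) (As Bs : nat -> set X) (v : X)
  (delta eps : R) (a x b y : nat -> X) :
  is_inner_product inner ->
  ccn A -> ccn B ->
  Eset A B !=set0 -> norm_bounded (Eset A B) ->
  Fset A B !=set0 -> norm_bounded (Fset A B) ->
  (forall n, ccn (As n)) -> (forall n, ccn (Bs n)) ->
  AW_conv As A -> AW_conv Bs B ->
  is_proj (closure (minus_set B A)) 0 v ->
  regular_couple A B v ->
  0 < delta -> 0 < eps ->
  (forall n, As n (a n) /\ As n (x n) /\ Bs n (b n) /\ Bs n (y n)) ->
  (fun n => dist (x n) (Eset A B)) @ \oo --> (0 : R) ->
  (fun n => dist (y n) (Fset A B)) @ \oo --> (0 : R) ->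
  exists n2 : nat, forall n : nat, (n2 <= n)%N ->
    ((2 * eps <= dist (a n) (Eset A B) -> 2 * eps <= dist (b n) (Fset A B) ->
      is_proj (As n) (b n) (a n) ->
      cosine inner (x n - a n) (b n - (a n + v)) <= delta) /\
     (2 * eps <= dist (a n) (Eset A B) ->
      2 * eps <= dist (b n.+1) (Fset A B) ->
      is_proj (Bs n.+1) (a n) (b n.+1) ->
      cosine inner (y n.+1 - b n.+1) (a n + v - b n.+1) <= delta)).
Proof.
move=> hin [_ cA nA] [_ cB nB] nE [ME hME] nF [MF hMF] ccnAs ccnBs AWA AWB hv reg
  delta0 eps0 mem xE yF.
have [rho rho0 [N [cosA cosB]]] :=
  cosine_estimates hin cA cB nA nB hv nE hME nF hMF eps0 delta0 reg.
have [n0 _ near_n] : \forall n \near \oo,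
    [/\ dist (x n) (Eset A B) < rho, dist (y n) (Fset A B) < rho,
        h_N N (As n) A < rho & h_N N (Bs n) B < rho].
  by near=> n; split; near: n; apply: (cvgr_lt _ _ _ rho0);
    [exact: xE | exact: yF | exact: AWA | exact: AWB].
exists n0 => n le_n0n.
have [xnE _ AnA BnB] := near_n n le_n0n.
have [_ yn1F _ Bn1B] := near_n n.+1 (leqW le_n0n).
have [Aan [Axn [Bbn _]]] := mem n.
have [_ [_ [Bbn1 Byn1]]] := mem n.+1.
have [_ cAn _] := ccnAs n; have [_ cBn _] := ccnBs n; have [_ cBn1 _] := ccnBs n.+1.
split=> [aE _ proj | aE bF proj].
- exact: cosA cAn cBn Axn Aan Bbn xnE aE AnA BnB proj.
- exact: cosB cAn cBn1 Axn Aan Byn1 Bbn1 xnE yn1F aE bF AnA Bn1B proj.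
Unshelve. all: by end_near. Qed.
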